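(* For any subgroup $\mathcal M\le\mathcal P_n$, $\mathrm{rank}\,A^{(\mathcal M)}=\mathrm{rank}\,D^{(\mathcal M)}=|\mathcal C^{*(\mathcal M)}|$.
   Context: $\mathcal P_n$ is the $n$-qubit Pauli group without phases; $\langle A,B\rangle=0$ if $A,B$ commute and $1$ otherwise. $\Gamma$ is a finite collection of supports $\gamma\subseteq\{1,\dots,n\}$; $\mathcal E_\gamma$ is the set of non-identity Paulis supported in $\gamma$, and $\mathcal E_\Gamma$ the disjoint union of the $\mathcal E_\gamma$ (each $e$ labeled by its support $\gamma_e$). For $h\in\mathcal P_n$, $h_\gamma$ is its restriction to $\gamma$ (identity elsewhere). $A^{(\mathcal M)}$ is the $|\mathcal M|\times|\mathcal E_\Gamma|$ matrix with $A^{(\mathcal M)}[M,e]=1$ if $M_{\gamma_e}=e$ and $0$ otherwise; $D^{(\mathcal M)}$ is the $|\mathcal M|\times|\mathcal E_\Gamma|$ matrix with entries $\langle M,e\rangle$. $\mathcal C^{*(\mathcal M)}$ is the set of nontrivial syndrome classes, i.e. equivalence classes of $\mathcal E_\Gamma$ under equality of $(\langle e,M\rangle)_{M\in\mathcal M}$, excluding the class of all-zero syndrome. *)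

From mathcomp Require Import all_boot all_order all_algebra.
Set Implicit Arguments. Unset Strict Implicit. Unset Printing Implicit Defensive.
Import GRing.Theory Num.Theory.
Local Open Scope ring_scope.

(* Single-qubit Pauli without phase, encoded as (x-bit, z-bit):
   I = (false,false), X = (true,false), Z = (false,true), Y = (true,true). *)
Definition Pauli (n : nat) := {ffun 'I_n -> bool * bool}.

Definition pauli_id (n : nat) : Pauli n := [ffun _ => (false, false)].

Definition pauli_mul (n : nat) (p q : Pauli n) : Pauli n :=
  [ffun i => (((p i).1 (+) (q i).1), ((p i).2 (+) (q i).2))].

(* <A,B> : false (=0) if A and B commute, true (=1) otherwise
   (symplectic form). *)
Definition pauli_comm (n : nat) (p q : Pauli n) : bool :=
  \big[addb/false]_(i < n) (((p i).1 && (q i).2) (+) ((p i).2 && (q i).1)).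

Definition is_pauli_subgroup (n : nat) (M : {set Pauli n}) : Prop :=
  pauli_id n \in M /\
  (forall p q, p \in M -> q \in M -> pauli_mul p q \in M).

Definition restr (n : nat) (g : {set 'I_n}) (h : Pauli n) : Pauli n :=
  [ffun i => if i \in g then h i else (false, false)].

Definition supp (n : nat) (h : Pauli n) : {set 'I_n} :=
  [set i | h i != (false, false)].

(* E_Gamma: the disjoint union of the E_gamma, gamma in Gamma; an element
   is a pair (gamma_e, e). *)
Definition errE_pred (n : nat) (Gamma : {set {set 'I_n}})
  (x : {set 'I_n} * Pauli n) : bool :=
  [&& x.1 \in Gamma, x.2 != pauli_id n & supp x.2 \subset x.1].

Definition ErrE (n : nat) (Gamma : {set {set 'I_n}}) :=
  {x : {set 'I_n} * Pauli n | errE_pred Gamma x}.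

Definition gam (n : nat) (Gamma : {set {set 'I_n}}) (e : ErrE Gamma)
  : {set 'I_n} := (val e).1.
Definition pau (n : nat) (Gamma : {set {set 'I_n}}) (e : ErrE Gamma)
  : Pauli n := (val e).2.

Definition Amat (R : nzRingType) (n : nat) (Gamma : {set {set 'I_n}})
  (M : {set Pauli n}) : 'M[R]_(#|M|, #|{: ErrE Gamma}|) :=
  \matrix_(i < #|M|, j < #|{: ErrE Gamma}|)
    (if restr (gam (enum_val j)) (enum_val i) == pau (enum_val j)
     then 1 else 0).

Definition Dmat (R : nzRingType) (n : nat) (Gamma : {set {set 'I_n}})
  (M : {set Pauli n}) : 'M[R]_(#|M|, #|{: ErrE Gamma}|) :=
  \matrix_(i < #|M|, j < #|{: ErrE Gamma}|)
    (if pauli_comm (enum_val i) (pau (enum_val j)) then 1 else 0).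

Definition syndrome (n : nat) (Gamma : {set {set 'I_n}}) (M : {set Pauli n})
  (e : ErrE Gamma) : {ffun Pauli n -> bool} :=
  [ffun m => (m \in M) && pauli_comm (pau e) m].

(* C^*(M): the nontrivial syndrome classes (equivalence classes of E_Gamma
   under equality of syndromes, excluding the all-zero syndrome class). *)
Definition nontriv_classes (n : nat) (Gamma : {set {set 'I_n}})
  (M : {set Pauli n}) : {set {set ErrE Gamma}} :=
  [set [set f : ErrE Gamma | syndrome M f == syndrome M e]
     | e in [set e : ErrE Gamma | syndrome M e != [ffun _ => false]]].

From mathcomp Require Import all_boot all_order all_algebra.
From mathcomp Require Import ring.
Set Implicit Arguments. Unset Strict Implicit. Unset Printing Implicit Defensive.
Import GRing.Theory Num.Theory.
Local Open Scope ring_scope.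

(* Everything is read off the column spaces, i.e. the row spaces of the
   transposes, inside R^M.  The column of D at e is m |-> <e,m>, which only
   depends on the syndrome of e.  A nonzero syndrome is a nontrivial character
   M -> Z/2, and the sign vectors (-1)^s of distinct characters are orthogonal,
   so the indicator vectors of the distinct nontrivial syndromes are linearly
   independent: rank D = |C*|.  The column of A at e is the indicator of
   M_gamma = e; Fourier inversion over the Paulis supported in gamma writes it
   as a combination of the vectors <q,.> with supp q in gamma, which are
   columns of D (or zero).  Conversely <e,.> is the sum over the e' supported
   in gamma_e of <e,e'> [M_gamma = e'], so A and D have the same column
   space. *)

Section PauliGroup.
Variable n : nat.
Implicit Types (p q a b m x : Pauli n) (g : {set 'I_n}) (G : {set Pauli n}).

Lemma pauli_commC p q : pauli_comm p q = pauli_comm q p.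
Proof.
by apply: eq_bigr => i _; case: (p i) (q i) => [[] []] [[] []].
Qed.

Lemma pauli_comm_mulr p a b :
  pauli_comm p (pauli_mul a b) = pauli_comm p a (+) pauli_comm p b.
Proof.
rewrite /pauli_comm -big_split; apply: eq_bigr => i _; rewrite ffunE.
by case: (p i) (a i) (b i) => [[] []] [[] []] [[] []].
Qed.

Lemma pauli_comm_mull p a b :
  pauli_comm (pauli_mul a b) p = pauli_comm a p (+) pauli_comm b p.
Proof. by rewrite !(pauli_commC _ p) pauli_comm_mulr. Qed.

Lemma pauli_comm_idr p : pauli_comm p (pauli_id n) = false.
Proof. by rewrite /pauli_comm big1 // => i _; rewrite ffunE; case: (p i) => [[] []]. Qed.

Lemma pauli_comm_idl p : pauli_comm (pauli_id n) p = false.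
Proof. by rewrite pauli_commC pauli_comm_idr. Qed.

Lemma pauli_mulK a : cancel (pauli_mul a) (pauli_mul a).
Proof.
by move=> b; apply/ffunP => i; rewrite !ffunE; case: (a i) (b i) => [[] []] [[] []].
Qed.

Lemma pauli_mul_eq_id a b : (pauli_mul a b == pauli_id n) = (a == b).
Proof.
apply/eqP/eqP => [/ffunP ab | <-]; last first.
  by apply/ffunP => i; rewrite !ffunE; case: (a i) => [[] []].
apply/ffunP => i; move: (ab i); rewrite !ffunE.
by case: (a i) (b i) => [[] []] [[] []].
Qed.

Lemma pauli_subgroupMl G a b : is_pauli_subgroup G -> a \in G ->
  (pauli_mul a b \in G) = (b \in G).
Proof.
case=> _ mulG aG; apply/idP/idP => [abG|]; last exact: mulG.
by rewrite -(pauli_mulK a b); apply: mulG.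
Qed.

Lemma supp_pauli_id : supp (pauli_id n) = set0.
Proof. by apply/setP => i; rewrite !inE ffunE eqxx. Qed.

Lemma notin_supp x i : i \notin supp x -> x i = (false, false).
Proof. by rewrite inE negbK => /eqP. Qed.

Lemma supp_restr g m : supp (restr g m) \subset g.
Proof. by apply/subsetP => i; rewrite inE ffunE; case: ifP; rewrite ?eqxx. Qed.

Lemma supp_pauli_mul g a b :
  supp a \subset g -> supp b \subset g -> supp (pauli_mul a b) \subset g.
Proof.
move=> /subsetP sag /subsetP sbg; apply/subsetP => i; apply: contraLR => ig.
have /notin_supp ai : i \notin supp a by apply: contra ig; apply: sag.
have /notin_supp bi : i \notin supp b by apply: contra ig; apply: sbg.
by rewrite inE negbK ffunE ai bi.
Qed.

Lemma pauli_comm_restr g q m :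
  supp q \subset g -> pauli_comm q (restr g m) = pauli_comm q m.
Proof.
move=> /subsetP sqg; apply: eq_bigr => i _; rewrite ffunE.
case: ifP => // /negbT ig.
have /notin_supp -> : i \notin supp q by apply: contra ig; apply: sqg.
by case: (m i) => [[] []].
Qed.

Lemma anticommuting_local x : x != pauli_id n ->
  exists2 q, supp q \subset supp x & pauli_comm x q.
Proof.
move=> x_neq1.
have [i xi] : exists i, i \in supp x.
  apply/set0Pn; apply: contra_neq x_neq1 => supp0.
  by apply/ffunP => i; rewrite ffunE notin_supp // supp0 inE.
exists [ffun j => if j == i then ((x i).2, ~~ (x i).2) else (false, false)].
  apply/subsetP => j; rewrite inE ffunE.
  by case: (j =P i) => [-> | _]; rewrite ?eqxx.
rewrite /pauli_comm (bigD1 i) //= big1 => [|j /negbTE ji]; last by rewrite ffunE ji !andbF.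
by rewrite ffunE eqxx addbF; move: xi; rewrite inE; case: (x i) => [[] []].
Qed.

Definition local_paulis g : {set Pauli n} := [set q | supp q \subset g].

Lemma local_pauli_subgroup g : is_pauli_subgroup (local_paulis g).
Proof.
by split=> [|a b]; rewrite !inE ?supp_pauli_id ?sub0set //; apply: supp_pauli_mul.
Qed.

End PauliGroup.

Section CharacterSums.
Variables (R : numDomainType) (n : nat).
Implicit Types (x y : Pauli n) (g : {set 'I_n}) (G M : {set Pauli n}).

Lemma sum_sign_comm G x : is_pauli_subgroup G ->
  \sum_(a in G) (-1) ^+ pauli_comm x a
    = if [exists a in G, pauli_comm x a] then 0 else #|G|%:R :> R.
Proof.
move=> subG; case: existsP => [[a /andP [aG xa]] | no_anti]; last first.
  rewrite -sumr_const; apply: eq_bigr => b bG.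
  by case: (boolP (pauli_comm x b)) => // xb; case: no_anti; exists b; rewrite bG.
set S := \sum_(b in G) _.
have S_opp : S = - S.
  rewrite {1}/S (reindex_inj (can_inj (pauli_mulK a))) -sumrN.
  apply: eq_big => [b | b bG]; first exact: pauli_subgroupMl.
  by rewrite pauli_comm_mulr xa signr_addb mulN1r.
have : S *+ 2 == 0 by rewrite mulr2n {2}S_opp subrr.
by rewrite mulrn_eq0 => /eqP.
Qed.

Lemma sum_sign_local g x : supp x \subset g ->
  \sum_(q in local_paulis g) (-1) ^+ pauli_comm x q
    = if x == pauli_id n then #|local_paulis g|%:R else 0 :> R.
Proof.
move=> sxg; rewrite sum_sign_comm; last exact: local_pauli_subgroup.
case: (x =P pauli_id n) => [-> | /eqP x_neq1].
  by case: existsP => // [[q /andP [_]]]; rewrite pauli_comm_idl.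
have [q sqx xq] := anticommuting_local x_neq1.
case: existsP => // [[]]; exists q; rewrite inE xq andbT.
exact: subset_trans sqx sxg.
Qed.

Definition pauli_syndrome M x : {ffun Pauli n -> bool} :=
  [ffun m => (m \in M) && pauli_comm x m].

Lemma pauli_syndrome_id M : pauli_syndrome M (pauli_id n) = [ffun _ => false].
Proof. by apply/ffunP => m; rewrite !ffunE pauli_comm_idl andbF. Qed.

Lemma sum_sign_syndrome M x y : is_pauli_subgroup M ->
  \sum_(m in M) (-1) ^+ (pauli_syndrome M x m (+) pauli_syndrome M y m)
    = if pauli_syndrome M x == pauli_syndrome M y then #|M|%:R else 0 :> R.
Proof.
move=> subM; set xy := pauli_mul x y.
have syn_eq : (pauli_syndrome M x == pauli_syndrome M y)
    = ~~ [exists m in M, pauli_comm xy m].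
  apply/eqP/existsPn => [/ffunP eq_xy m | anti_xy].
    move: (eq_xy m); rewrite !ffunE pauli_comm_mull.
    by case: (m \in M) => //= ->; rewrite addbb.
  apply/ffunP => m; move: (anti_xy m); rewrite !ffunE pauli_comm_mull.
  by case: (m \in M) => //=; case: (pauli_comm x m) (pauli_comm y m) => [] [].
rewrite syn_eq if_neg -sum_sign_comm //; apply: eq_bigr => m mM.
by rewrite !ffunE mM pauli_comm_mull.
Qed.

Lemma sum_sign_nontriv_syndrome M x : is_pauli_subgroup M ->
  pauli_syndrome M x != [ffun _ => false] ->
  \sum_(m in M) (-1) ^+ pauli_syndrome M x m = 0 :> R.
Proof.
move=> subM syn_neq0; have := sum_sign_syndrome (pauli_id n) x subM.
rewrite pauli_syndrome_id eq_sym (negbTE syn_neq0) => sum0.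
by rewrite -[RHS]sum0; apply: eq_bigr => m _; rewrite !ffunE.
Qed.

Lemma sum_sign_restr g m p : supp p \subset g ->
  \sum_(q in local_paulis g) (-1) ^+ pauli_comm m q * (-1) ^+ pauli_comm p q
    = if restr g m == p then #|local_paulis g|%:R else 0 :> R.
Proof.
move=> spg; have sxg := supp_pauli_mul (supp_restr g m) spg.
rewrite -pauli_mul_eq_id -(sum_sign_local sxg); apply: eq_bigr => q; rewrite inE => sqg.
by rewrite pauli_comm_mull signr_addb !(pauli_commC _ q) pauli_comm_restr.
Qed.

End CharacterSums.

Lemma natr_bool_sign (R : numFieldType) (b : bool) : b%:R = (1 - (-1) ^+ b) / 2 :> R.
Proof.
by case: b; rewrite /= ?expr0 ?subrr ?mul0r // expr1 opprK -mulr2n divff ?pnatr_eq0.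
Qed.

Section Ranks.
Variables (R : numFieldType) (n : nat) (Gamma : {set {set 'I_n}}) (M : {set Pauli n}).

Definition comm_row (q : Pauli n) : 'rV[R]_#|M| := \row_i (pauli_comm q (enum_val i))%:R.

Definition restr_row (e : ErrE Gamma) : 'rV[R]_#|M| :=
  \row_i (restr (gam e) (enum_val i) == pau e)%:R.

Lemma row_Dmat_tr r : row r (Dmat R Gamma M)^T = comm_row (pau (enum_val r)).
Proof. by apply/rowP => i; rewrite !mxE pauli_commC; case: pauli_comm. Qed.

Lemma row_Amat_tr r : row r (Amat R Gamma M)^T = restr_row (enum_val r).
Proof. by apply/rowP => i; rewrite !mxE; case: (_ == _). Qed.

Lemma ErrEP (e : ErrE Gamma) :
  [/\ gam e \in Gamma, pau e != pauli_id n & supp (pau e) \subset gam e].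
Proof. exact/and3P/(valP e). Qed.

Lemma comm_row_local_sub g q : g \in Gamma -> supp q \subset g ->
  (comm_row q <= (Dmat R Gamma M)^T)%MS.
Proof.
move=> gG sqg; case: (q =P pauli_id n) => [-> | /eqP q_neq1].
  suff -> : comm_row (pauli_id n) = 0 by apply: sub0mx.
  by apply/rowP => i; rewrite !mxE pauli_comm_idl.
have eP : errE_pred Gamma (g, q) by apply/and3P.
have := row_sub (enum_rank (exist _ (g, q) eP : ErrE Gamma)) (Dmat R Gamma M)^T.
by rewrite row_Dmat_tr enum_rankK.
Qed.

Lemma restr_row_expansion (e : ErrE Gamma) :
  restr_row e = \sum_(q in local_paulis (gam e))
    (- 2 / #|local_paulis (gam e)|%:R * (-1) ^+ pauli_comm (pau e) q) *: comm_row q.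
Proof.
have [_ e_neq1 se] := ErrEP e; set P := local_paulis (gam e).
have P_neq0 : #|P|%:R != 0 :> R.
  rewrite pnatr_eq0 -lt0n; apply/card_gt0P; exists (pauli_id n).
  by rewrite inE supp_pauli_id sub0set.
have sum_e : \sum_(q in P) (-1) ^+ pauli_comm (pau e) q = 0 :> R.
  by rewrite sum_sign_local // (negbTE e_neq1).
apply/rowP => i; rewrite !mxE summxE; under eq_bigr do rewrite !mxE.
set m := enum_val i.
transitivity ((#|P|%:R : R)^-1 *
    \sum_(q in P) (-1) ^+ pauli_comm m q * (-1) ^+ pauli_comm (pau e) q).
  by rewrite sum_sign_restr //; case: (_ == _); rewrite ?mulr0 ?mulVf.
transitivity (\sum_(q in P)
    ((#|P|%:R : R)^-1 * ((-1) ^+ pauli_comm m q * (-1) ^+ pauli_comm (pau e) q)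
     - #|P|%:R^-1 * (-1) ^+ pauli_comm (pau e) q)).
  by rewrite sumrB -!mulr_sumr sum_e mulr0 subr0.
apply: eq_bigr => q _; rewrite natr_bool_sign pauli_commC.
(* [field] would try to evaluate the boolean exponents: abstract the signs. *)
by move: ((-1) ^+ _) ((-1) ^+ _) => a b; field.
Qed.

Lemma comm_row_expansion (e : ErrE Gamma) :
  comm_row (pau e)
    = \sum_(f | gam f == gam e) (pauli_comm (pau e) (pau f))%:R *: restr_row f.
Proof.
have [gG _ se] := ErrEP e; set g := gam e in gG se *.
apply/rowP => i; rewrite !mxE summxE; under eq_bigr do rewrite !mxE.
set m := enum_val i; rewrite -(pauli_comm_restr m se).
case: (restr g m =P pauli_id n) => [m1 | /eqP m_neq1].
  rewrite m1 pauli_comm_idr big1 // => f /eqP gf.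
  have [_ f_neq1 _] := ErrEP f.
  by rewrite gf m1 eq_sym (negbTE f_neq1) mulr0.
have f0P : errE_pred Gamma (g, restr g m) by apply/and3P; rewrite supp_restr.
pose f0 : ErrE Gamma := exist _ (g, restr g m) f0P.
rewrite (bigD1 f0) //= big1 ?addr0 => [|f /andP [/eqP gf f_neq0]].
  by rewrite /gam /pau /= eqxx mulr1.
rewrite gf; case: eqP => [mf | _]; last by rewrite mulr0.
case/eqP: f_neq0; apply: val_inj; rewrite /= mf -gf.
exact: surjective_pairing.
Qed.

Lemma Amat_tr_sub_Dmat_tr : ((Amat R Gamma M)^T <= (Dmat R Gamma M)^T)%MS.
Proof.
apply/row_subP => r; rewrite row_Amat_tr restr_row_expansion.
have [gG _ _] := ErrEP (enum_val r).
apply: summx_sub => q; rewrite inE => sq.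
exact/scalemx_sub/(comm_row_local_sub gG sq).
Qed.

Lemma Dmat_tr_sub_Amat_tr : ((Dmat R Gamma M)^T <= (Amat R Gamma M)^T)%MS.
Proof.
apply/row_subP => r; rewrite row_Dmat_tr comm_row_expansion.
apply: summx_sub => f _; apply: scalemx_sub.
by rewrite -(enum_rankK f) -row_Amat_tr row_sub.
Qed.

Lemma rank_Amat_Dmat : \rank (Amat R Gamma M) = \rank (Dmat R Gamma M).
Proof.
rewrite -mxrank_tr -[RHS]mxrank_tr; apply/eqP.
by rewrite eqn_leq !mxrankS ?Amat_tr_sub_Dmat_tr ?Dmat_tr_sub_Amat_tr.
Qed.

Hypothesis subM : is_pauli_subgroup M.

Definition nontriv_syndromes : {set {ffun Pauli n -> bool}} :=
  [set syndrome M e | e in [set e : ErrE Gamma | syndrome M e != [ffun _ => false]]].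

Lemma nontriv_syndromeP s : s \in nontriv_syndromes ->
  exists2 e : ErrE Gamma, s = pauli_syndrome M (pau e) & s != [ffun _ => false].
Proof. by case/imsetP => e; rewrite inE => syn_neq0 ->; exists e. Qed.

Definition syndrome_mx : 'M[R]_(#|nontriv_syndromes|, #|M|) :=
  \matrix_(j, i) ((enum_val j : {ffun Pauli n -> bool}) (enum_val i))%:R.

Definition syndrome_sign_mx : 'M[R]_(#|nontriv_syndromes|, #|M|) :=
  \matrix_(j, i) (-1) ^+ (enum_val j : {ffun Pauli n -> bool}) (enum_val i).

Lemma syndrome_mx_orthogonal :
  syndrome_mx *m syndrome_sign_mx^T = (- (#|M|%:R / 2))%:M.
Proof.
apply/matrixP => j k; rewrite !mxE -(inj_eq enum_val_inj).
under eq_bigr do rewrite !mxE.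
have [x -> _] := nontriv_syndromeP (enum_valP j).
have [y -> y_neq0] := nontriv_syndromeP (enum_valP k).
transitivity (\sum_(m in M)
    (pauli_syndrome M (pau x) m)%:R * (-1) ^+ pauli_syndrome M (pau y) m : R).
  by rewrite [RHS](big_enum_val (A := mem M)).
transitivity (\sum_(m in M) ((-1) ^+ pauli_syndrome M (pau y) m
    - (-1) ^+ (pauli_syndrome M (pau x) m (+) pauli_syndrome M (pau y) m)) / 2 : R).
  by apply: eq_bigr => m _; rewrite natr_bool_sign signr_addb mulrAC mulrBl mul1r.
rewrite -mulr_suml sumrB sum_sign_nontriv_syndrome // sum_sign_syndrome //.
by case: (_ == _); rewrite /= ?subr0 ?sub0r ?mulNr ?mul0r.
Qed.

Lemma rank_syndrome_mx : \rank syndrome_mx = #|nontriv_syndromes|.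
Proof.
apply/eqP; rewrite eqn_leq rank_leq_row /=.
have M_neq0 : #|M|%:R != 0 :> R.
  by rewrite pnatr_eq0 -lt0n; apply/card_gt0P; exists (pauli_id n); case: subM.
apply: (@mulmx1_min_rank _ _ _ _ _ 1%:M ((- 2 / #|M|%:R) *: syndrome_sign_mx^T)).
rewrite mul1mx -scalemxAr syndrome_mx_orthogonal scale_scalar_mx.
by congr _%:M; field.
Qed.

Lemma row_syndrome_mx j :
  exists e : ErrE Gamma, row j syndrome_mx = comm_row (pau e).
Proof.
have [e e_syn _] := nontriv_syndromeP (enum_valP j).
by exists e; apply/rowP => i; rewrite !mxE e_syn ffunE enum_valP.
Qed.

Lemma comm_row_sub_syndrome_mx (e : ErrE Gamma) : (comm_row (pau e) <= syndrome_mx)%MS.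
Proof.
have [syn0 | syn_neq0] := eqVneq (syndrome M e) [ffun _ => false].
  suff -> : comm_row (pau e) = 0 by apply: sub0mx.
  apply/rowP => i; move/ffunP: syn0 => /(_ (enum_val i)).
  by rewrite !mxE !ffunE enum_valP => /= ->.
have syn_e : syndrome M e \in nontriv_syndromes by apply: imset_f; rewrite inE.
suff -> : comm_row (pau e) = row (enum_rank_in syn_e (syndrome M e)) syndrome_mx.
  exact: row_sub.
by apply/rowP => i; rewrite !mxE enum_rankK_in // ffunE enum_valP.
Qed.

Lemma rank_Dmat : \rank (Dmat R Gamma M) = #|nontriv_syndromes|.
Proof.
rewrite -mxrank_tr -rank_syndrome_mx; apply/eqP; rewrite eqn_leq !mxrankS //.
  apply/row_subP => j; have [e ->] := row_syndrome_mx j.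
  by rewrite -(enum_rankK e) -row_Dmat_tr row_sub.
by apply/row_subP => r; rewrite row_Dmat_tr comm_row_sub_syndrome_mx.
Qed.

Lemma card_nontriv_classes : #|nontriv_classes Gamma M| = #|nontriv_syndromes|.
Proof.
pose syndrome_class s := [set f : ErrE Gamma | syndrome M f == s].
rewrite [nontriv_classes _ _](_ : _ = syndrome_class @: nontriv_syndromes).
  apply: card_in_imset => _ s2 /imsetP [e _ ->] _ same_class.
  have : e \in syndrome_class (syndrome M e) by rewrite inE.
  by rewrite same_class inE => /eqP.
by rewrite -imset_comp.
Qed.

End Ranks.

Theorem corollary1 (R : realFieldType) (n : nat) (Gamma : {set {set 'I_n}})
  (M : {set Pauli n}) :
  is_pauli_subgroup M ->
  \rank (Amat R Gamma M) = #|nontriv_classes Gamma M| /\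
  \rank (Dmat R Gamma M) = #|nontriv_classes Gamma M|.
Proof.
move=> subM.
by rewrite card_nontriv_classes rank_Amat_Dmat (rank_Dmat _ _ subM).
Qed.
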